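(* Let $\tau_1(x)=\frac{x+1}{x+3}$ and $\tau_2(x)=\frac{2}{4-x}$ on $[0,1]$ (so $\tau_1([0,1])=[1/3,1/2]$, $\tau_2([0,1])=[1/2,2/3]$), and let $A_1(y)=\frac12\left(\log\frac{2}{(y-1)^2}+\log 2\right)$ (used on $\tau_1([0,1])$) and $A_2(y)=\frac12\left(\log\frac{2}{y^2}+\log 2\right)$ (used on $\tau_2([0,1])$). Let $b=\frac{3+\sqrt{17}}{2}$ and $V(x)=\max\{\log(x+b),\log(1-x+b)\}$. Then for every $x\in[0,1]$, $$V(x)+\log b=\max\{A_1(\tau_1(x))+V(\tau_1(x)),\,A_2(\tau_2(x))+V(\tau_2(x))\},$$ i.e. $V$ is a subaction for this potential with maximal value $m(A)=\log\left(\frac{3+\sqrt{17}}{2}\right)$.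
   Context: This is the potential associated (in the ergodic-optimization approach to the joint spectral radius) with the pair of matrices $A_1=\begin{pmatrix}2&1\\2&2\end{pmatrix}$, $A_2=\begin{pmatrix}2&2\\1&2\end{pmatrix}$, whose projective actions on $[0,1]$ are $\tau_1,\tau_2$. Here ''subaction with constant $c$'' means a continuous $V$ satisfying $V(x)+c=\max_{i}[A_i(\tau_i(x))+V(\tau_i(x))]$ for all $x$. *)

From Stdlib Require Import Reals.
Open Scope R_scope.

Definition tau1 (x : R) : R := (x + 1) / (x + 3).
Definition tau2 (x : R) : R := 2 / (4 - x).

Definition potA1 (y : R) : R := / 2 * (ln (2 / (y - 1) ^ 2) + ln 2).
Definition potA2 (y : R) : R := / 2 * (ln (2 / y ^ 2) + ln 2).

Definition bconst : R := (3 + sqrt 17) / 2.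

Definition subV (x : R) : R := Rmax (ln (x + bconst)) (ln (1 - x + bconst)).

(* On [0,1], tau1 lands in [0,1/2] and tau2 in [1/2,1], so on each image a single branch
   of the max defining V is active, and A_i (tau_i x) = ln (2 / d) with d = 1 - tau1 x =
   2/(x+3), resp. d = tau2 x = 2/(4-x). Each side of the max then collapses to one
   logarithm, e.g. ln ((x+3) (2/(x+3) + b)) = ln (b x + 3 b + 2) = ln (b (x + b)), because
   b^2 = 3 b + 2. Hence the right-hand side is ln b + max (ln (x+b), ln (1-x+b)). *)
From Stdlib Require Import Reals Lra.
From Stdlib Require Rminmax.
Open Scope R_scope.

Lemma ln_le a c : 0 < a -> a <= c -> ln a <= ln c.
Proof.
  intros Ha [Hlt | ->]; [left; apply ln_increasing |]; lra.
Qed.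

Lemma bconst_gt3 : 3 < bconst.
Proof.
  unfold bconst.
  assert (H17 := sqrt_sqrt 17 ltac:(lra)).
  assert (0 <= sqrt 17) by apply sqrt_pos.
  nra.
Qed.

Lemma bconst_sqr : bconst * bconst = 3 * bconst + 2.
Proof.
  unfold bconst.
  assert (H17 := sqrt_sqrt 17 ltac:(lra)).
  nra.
Qed.

Lemma half_ln_two_div_sqr c : 0 < c -> / 2 * (ln (2 / c ^ 2) + ln 2) = ln (2 / c).
Proof.
  intros Hc.
  assert (Hsq : 2 / c ^ 2 * 2 = (2 / c) ^ 2) by (field; lra).
  rewrite <- ln_mult, Hsq, ln_pow by (try apply Rdiv_lt_0_compat; simpl; nra).
  simpl; field.
Qed.

Lemma potA1_eq y : y < 1 -> potA1 y = ln (2 / (1 - y)).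
Proof.
  intros Hy; unfold potA1.
  replace ((y - 1) ^ 2) with ((1 - y) ^ 2) by ring.
  apply half_ln_two_div_sqr; lra.
Qed.

Lemma potA2_eq y : 0 < y -> potA2 y = ln (2 / y).
Proof. apply half_ln_two_div_sqr. Qed.

Lemma subV_le_half y : 0 <= y <= 1 / 2 -> subV y = ln (1 - y + bconst).
Proof.
  intros Hy; pose proof bconst_gt3.
  apply Rmax_right, ln_le; lra.
Qed.

Lemma subV_ge_half y : 1 / 2 <= y <= 1 -> subV y = ln (y + bconst).
Proof.
  intros Hy; pose proof bconst_gt3.
  apply Rmax_left, ln_le; lra.
Qed.

Lemma one_minus_tau1 x : 0 <= x -> 1 - tau1 x = 2 / (x + 3).
Proof. intros Hx; unfold tau1; field; lra. Qed.

Lemma tau1_range x : 0 <= x <= 1 -> 0 <= tau1 x <= 1 / 2.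
Proof.
  intros Hx; unfold tau1.
  split.
  - left; apply Rdiv_lt_0_compat; lra.
  - apply Rmult_le_reg_r with (x + 3); field_simplify; lra.
Qed.

Lemma tau2_range x : 0 <= x <= 1 -> 1 / 2 <= tau2 x <= 1.
Proof.
  intros Hx; unfold tau2.
  split; apply Rmult_le_reg_r with (4 - x); field_simplify; lra.
Qed.

Lemma potA1_tau1_add_subV x : 0 <= x <= 1 ->
  potA1 (tau1 x) + subV (tau1 x) = ln bconst + ln (x + bconst).
Proof.
  intros Hx; pose proof bconst_gt3; pose proof bconst_sqr.
  pose proof (tau1_range x Hx).
  rewrite potA1_eq, subV_le_half, one_minus_tau1 by lra.
  replace (2 / (2 / (x + 3))) with (x + 3) by (field; lra).
  assert (0 < 2 / (x + 3)) by (apply Rdiv_lt_0_compat; lra).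
  rewrite <- !ln_mult by lra.
  f_equal.
  replace ((x + 3) * (2 / (x + 3) + bconst)) with (2 + bconst * (x + 3)) by (field; lra).
  nra.
Qed.

Lemma potA2_tau2_add_subV x : 0 <= x <= 1 ->
  potA2 (tau2 x) + subV (tau2 x) = ln bconst + ln (1 - x + bconst).
Proof.
  intros Hx; pose proof bconst_gt3; pose proof bconst_sqr.
  pose proof (tau2_range x Hx).
  rewrite potA2_eq, subV_ge_half by lra.
  unfold tau2.
  replace (2 / (2 / (4 - x))) with (4 - x) by (field; lra).
  assert (0 < 2 / (4 - x)) by (apply Rdiv_lt_0_compat; lra).
  rewrite <- !ln_mult by lra.
  f_equal.
  replace ((4 - x) * (2 / (4 - x) + bconst)) with (2 + bconst * (4 - x)) by (field; lra).
  nra.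
Qed.

Theorem mainTheorem3 :
  forall x : R, 0 <= x <= 1 ->
    subV x + ln bconst = Rmax (potA1 (tau1 x) + subV (tau1 x)) (potA2 (tau2 x) + subV (tau2 x)).
Proof.
  intros x Hx.
  rewrite potA1_tau1_add_subV, potA2_tau2_add_subV, Rminmax.R.plus_max_distr_l by exact Hx.
  apply Rplus_comm.
Qed.
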